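(* Let $S$ be a numerical semigroup minimally generated by $n_1<\cdots<n_e$, with conductor $c$, and let $m\ge 2c-1$. Let $M$ and $N$ be $(S,m,r)$-amenable sets with shadows $L_M$ and $L_N$ respectively. If $L_M\subseteq L_N$, then $\sharp\mathrm D(M)\le\sharp\mathrm D(N)$.
   Context: A numerical semigroup is a submonoid of $\mathbb N$ with finite complement; its conductor $c$ is the least element of $S$ such that $c+n\in S$ for all $n\in\mathbb N$. For $x\in S$, $\mathrm D(x)=\{\alpha\in S\mid x-\alpha\in S\}$ and for $A\subseteq S$, $\mathrm D(A)=\bigcup_{x\in A}\mathrm D(x)$. A set $M=\{m_1<\cdots<m_r\}\subseteq S$ with $2c-1\le m=m_1$ is $(S,m,r)$-amenable if $\mathrm D(m_i)\cap[m,\infty)\subseteq M$ for all $i$. The ground is $\{m,\ldots,m+n_e-1\}$ and the shadow of an amenable set $M$ is $M\cap\{m,\ldots,m+n_e-1\}$. *)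

From mathcomp Require Import all_boot.
Set Implicit Arguments. Unset Strict Implicit. Unset Printing Implicit Defensive.

Definition submonoid (S : pred nat) : Prop :=
  S 0 /\ (forall x y, S x -> S y -> S (x + y)).

Definition numerical_semigroup (S : pred nat) : Prop :=
  submonoid S /\ exists N, forall n, N <= n -> S n.

Inductive gen_by (g : seq nat) : nat -> Prop :=
| gen_by0 : gen_by g 0
| gen_byS a x : a \in g -> gen_by g x -> gen_by g (a + x).

Definition generates (S : pred nat) (g : seq nat) : Prop :=
  forall x, S x <-> gen_by g x.

(* S is minimally generated by n_1 < ... < n_e, listed increasingly in g:
   g generates S and no proper sub-family of g generates S
   (it suffices that no single generator can be dropped). *)
Definition minimally_generated (S : pred nat) (g : seq nat) : Prop :=
  sorted ltn g /\ generates S g /\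
  (forall a, a \in g -> ~ generates S (rem a g)).

Definition is_conductor (S : pred nat) (c : nat) : Prop :=
  S c /\ (forall n, S (c + n)) /\
  (forall c', S c' -> (forall n, S (c' + n)) -> c <= c').

Definition Dx (S : pred nat) (x a : nat) : bool := S a && (a <= x) && S (x - a).

(* D(A) for a finite A (given as a seq), listed without repetition *)
Definition DA (S : pred nat) (A : seq nat) : seq nat :=
  [seq a <- iota 0 (\max_(x <- A) x).+1 | has (fun x => Dx S x a) A].

Definition amenable (S : pred nat) (c m r : nat) (M : seq nat) : Prop :=
  sorted ltn M /\ size M = r /\ all S M /\ 0 < r /\ head 0 M = m /\
  2 * c - 1 <= m /\
  (forall x a, x \in M -> Dx S x a -> m <= a -> a \in M).

Definition shadow (m ne : nat) (M : seq nat) : seq nat :=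
  [seq x <- M | (m <= x) && (x < m + ne)].

From mathcomp Require Import all_boot.
From mathcomp Require Import zify.
Set Implicit Arguments. Unset Strict Implicit.

(* Split D(M) at m.  Above m, amenability gives D(M) ∩ [m, ∞) = M, which has r
   elements for both sets.  Below m, every a in D(x) with x in M already lies
   in D(y) for some y in the shadow of M: while x >= m + n_e, write
   x - a = n + s with n a generator and s in S; then x - n is in D(x), is at
   least m, hence lies in M, and still has a in its divisor set.  So
   D(M) ∩ [0, m) ⊆ D(L_M) ⊆ D(L_N) ⊆ D(N). *)

Lemma sorted_leq_last (s : seq nat) n : sorted leq s -> n \in s -> n <= last 0 s.
Proof.
move=> s_sorted ns; have s_gt0 : 0 < size s by case: s s_sorted ns.
rewrite -nth_last -(nth_index 0 ns).
have ns_lt : index n s < size s by rewrite index_mem.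
by apply: (sorted_leq_nth leq_trans leqnn) => //; rewrite ?inE; lia.
Qed.

Lemma sorted_head_leq (s : seq nat) x : sorted leq s -> x \in s -> head 0 s <= x.
Proof.
case: s => [//|y s] /= /(order_path_min leq_trans) /allP y_min.
by rewrite inE => /orP [/eqP -> //|/y_min].
Qed.

Lemma gen_by_mem g a : a \in g -> gen_by g a.
Proof. by move=> ag; rewrite -[a]addn0; apply: gen_byS => //; exact: gen_by0. Qed.

Lemma gen_by_sub_gen g y : gen_by g y -> 0 < y ->
  exists n, [/\ n \in g, 0 < n, n <= y & gen_by g (y - n)].
Proof.
elim=> [//|a x ag gx IH] y_gt0.
have [a0|a_gt0] := posnP a; first by move: y_gt0; rewrite a0; exact: IH.
by exists a; rewrite addKn leq_addr.
Qed.

Lemma mem_DA S A a : (a \in DA S A) = has (fun x => Dx S x a) A.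
Proof.
rewrite mem_filter mem_iota add0n /=; apply: andb_idr.
move=> /hasP [x xA /andP [/andP [_ ax] _]]; rewrite ltnS.
exact: leq_trans ax (leq_bigmax_seq _ xA isT).
Qed.

Lemma DA_uniq S A : uniq (DA S A).
Proof. by rewrite filter_uniq // iota_uniq. Qed.

Lemma amenable_geq S c m r M x : amenable S c m r M -> x \in M -> m <= x.
Proof.
case=> M_sorted [_ [_ [_ [<- _]]]].
exact/sorted_head_leq/(sub_sorted ltnW).
Qed.

Section Divisors.

Variables (S : pred nat) (g : seq nat).
Hypotheses (S_submonoid : submonoid S) (S_gen : generates S g)
  (g_sorted : sorted ltn g).

Lemma Dx_refl x : S x -> Dx S x x.
Proof. by case: S_submonoid => S0 _ Sx; rewrite /Dx Sx leqnn subnn S0. Qed.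

Lemma Dx_descent c m r M x a : amenable S c m r M -> x \in M ->
  m + last 0 g <= x -> a < m -> Dx S x a ->
  exists x', [/\ x' \in M, x' < x & Dx S x' a].
Proof.
case: S_submonoid => _ SD hM xM x_large am.
case: (hM) => _ [_ [_ [_ [_ [_ M_closed]]]]].
move=> /andP [/andP [Sa ax] Sxa]; have mx := amenable_geq hM xM.
have [n [ng n_gt0 n_le Sr]] := gen_by_sub_gen ((S_gen _).1 Sxa) (ltac:(lia) : 0 < x - a).
have n_last := sorted_leq_last (sub_sorted ltnW g_sorted) ng.
have Sn : S n by apply/S_gen/gen_by_mem.
have Sr' : S (x - a - n) by apply/S_gen.
have Sxn : S (x - n) by rewrite (_ : x - n = a + (x - a - n)); [apply: SD | lia].
exists (x - n); split.
- apply: (M_closed x) => //; last lia.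
  by rewrite /Dx Sxn leq_subr (_ : x - (x - n) = n) //; lia.
- lia.
- by rewrite /Dx Sa (_ : x - n - a = x - a - n) ?Sr' ?andbT //; lia.
Qed.

Lemma Dx_shadow c m r M x a : amenable S c m r M -> x \in M -> a < m ->
  Dx S x a -> exists2 y, y \in shadow m (last 0 g) M & Dx S y a.
Proof.
move=> hM; elim/ltn_ind: x => x IH xM am hD.
have [x_small|x_large] := ltnP x (m + last 0 g).
  by exists x => //; rewrite mem_filter xM x_small (amenable_geq hM xM).
have [x' [x'M x'x hD']] := Dx_descent hM xM x_large am hD.
exact: IH x'x x'M am hD'.
Qed.

Lemma count_DA_geq c m r M : amenable S c m r M ->
  count (fun a => m <= a) (DA S M) = r.
Proof.
move=> hM; case: (hM) => M_sorted [<- [SM [_ [_ [_ M_closed]]]]].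
rewrite -size_filter; apply/perm_size/uniq_perm.
- by rewrite filter_uniq ?DA_uniq.
- exact: (sorted_uniq ltn_trans ltnn M_sorted).
move=> a; rewrite mem_filter mem_DA; apply/andP/idP => [[ma /hasP [x xM hD]]|aM].
  exact: M_closed xM hD ma.
split; first exact: amenable_geq hM aM.
by apply/hasP; exists a => //; apply/Dx_refl/(allP SM).
Qed.

Lemma count_DA_ltn c m r M N : amenable S c m r M ->
  {subset shadow m (last 0 g) M <= shadow m (last 0 g) N} ->
  count (fun a => a < m) (DA S M) <= count (fun a => a < m) (DA S N).
Proof.
move=> hM sub_shadow; rewrite -!size_filter.
apply: uniq_leq_size; first by rewrite filter_uniq ?DA_uniq.
move=> a; rewrite !(mem_filter (fun a => a < m)) !mem_DA.
move=> /andP [am /hasP [x xM hD]].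
have [y yL hy] := Dx_shadow hM xM am hD.
move: (sub_shadow y yL); rewrite mem_filter => /andP [_ yN].
by rewrite am; apply/hasP; exists y.
Qed.

End Divisors.

Theorem corollary3p11 (S : pred nat) (g : seq nat) (c m r : nat)
    (M N : seq nat) :
  numerical_semigroup S ->
  minimally_generated S g ->
  is_conductor S c ->
  2 * c - 1 <= m ->
  amenable S c m r M ->
  amenable S c m r N ->
  {subset shadow m (last 0 g) M <= shadow m (last 0 g) N} ->
  size (DA S M) <= size (DA S N).
Proof.
move=> [S_submonoid _] [g_sorted [S_gen _]] _ _ hM hN sub_shadow.
have split_at_m A : size (DA S A) =
    count (fun a => a < m) (DA S A) + count (fun a => m <= a) (DA S A).
  rewrite -(count_predC (fun a => a < m)); congr (_ + _).
  by apply: eq_count => a; rewrite /= -leqNgt.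
rewrite !split_at_m (count_DA_geq S_submonoid hM) (count_DA_geq S_submonoid hN).
by rewrite leq_add2r (count_DA_ltn S_submonoid S_gen g_sorted hM).
Qed.
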